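(* For $n\ge 2$, there is a bijection between the set of signed permutations $\pi=\pi_1\pi_2\cdots\pi_{n-1}\pi_n$ of $\{0,1,\dots,n-1\}$ with $\pi_n=0$ (unbarred) that are representations of signed skew derangements on $[n]$, and the set of derangements of type $B$ on $[n-1]$.
   Context: A signed permutation on a set $S$ of integers is an arrangement of the elements of $S$ in which some entries carry a bar. A derangement of type $B$ on $[m]$ is a signed permutation $\tau_1\cdots\tau_m$ of $[m]$ with $\tau_i\neq i$ for all $i$ (where $\tau_i=\bar i$ is allowed). A signed set on $[n]$ is $[n]$ with some elements barred; for such $X$, $X-1$ is obtained by subtracting $1$ from each element using $\bar i-1=\overline{i-1}$. A signed skew derangement on $[n]$ is a bijection $f:X\to X-1$, for some signed set $X$ on $[n]$, with $f(x)\ne x$ for all $x\in X$. The representation of a bijection $f:X\to X-1$ is the signed permutation $\pi_1\cdots\pi_n$ of $\{0,\dots,n-1\}$ given by $\pi_i=f(\sigma_i)$, where $\sigma_i$ is the element of $X$ with underlying value $i$; this gives a bijection between all such maps $f$ (over all signed sets $X$) and all signed permutations of $\{0,\dots,n-1\}$. *)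

From mathcomp Require Import all_boot.
Set Implicit Arguments. Unset Strict Implicit. Unset Printing Implicit Defensive.

(* A signed element is a pair (value, barred?) : nat * bool.
   (i, true) stands for \bar i, (i, false) for the unbarred i. *)
Definition selt := (nat * bool)%type.

Definition signed_perm_on (S : seq nat) (s : seq selt) : bool :=
  perm_eq (map fst s) S.

Definition typeB_derangement (m : nat) (t : seq selt) : bool :=
  signed_perm_on (iota 1 m) t &&
  all (fun i => nth (0, false) t i.-1 != (i, false)) (iota 1 m).

Definition signed_set (n : nat) (X : seq selt) : bool :=
  map fst X == iota 1 n.

Definition minus1 (X : seq selt) : seq selt :=
  map (fun x => (x.1.-1, x.2)) X.

Definition bij_onto (f : selt -> selt) (X Y : seq selt) : Prop :=
  {in X, injective f} /\ (forall x, x \in X -> f x \in Y) /\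
  (forall y, y \in Y -> exists2 x, x \in X & f x = y).

Definition signed_skew_derangement (n : nat) (X : seq selt) (f : selt -> selt)
  : Prop :=
  signed_set n X /\ bij_onto f X (minus1 X) /\ (forall x, x \in X -> f x != x).

Definition sigma (X : seq selt) (i : nat) : selt :=
  nth (i, false) X (index i (map fst X)).

Definition representation (n : nat) (X : seq selt) (f : selt -> selt)
  : seq selt :=
  [seq f (sigma X i) | i <- iota 1 n].

Definition repr_set (n : nat) (p : seq selt) : Prop :=
  signed_perm_on (iota 0 n) p /\ last (0, true) p = (0, false) /\
  exists X f, signed_skew_derangement n X f /\ representation n X f = p.

Definition derB_set (m : nat) (t : seq selt) : Prop := typeB_derangement m t.

From mathcomp Require Import all_boot.
From Stdlib Require Import ProofIrrelevance.

Set Implicit Arguments.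
Unset Strict Implicit.
Unset Printing Implicit Defensive.

(* For a bijection f : X -> X - 1 the entries of its representation pi are
   the elements of X - 1, so the bar of i in X is the bar carried by the value
   i - 1 in pi; thus X and f are recovered from pi, and f(sigma_i) <> sigma_i
   says that pi_i is not i barred like the value i - 1 in pi.  When pi_n = 0
   we drop that last entry.  Toggling the bar of every value v by the bar of
   v - 1 turns the condition into pi_i <> i, i.e. a type B derangement, and
   the toggling is undone by xor-ing the bars of the values 1, ..., v. *)

(* [bar_of s v] is [false] when [v] does not occur in [s]; in [twist] this is
   why the value 1 keeps its bar. *)
Definition bar_of (s : seq selt) (v : nat) : bool :=
  (nth (0, false) s (index v (map fst s))).2.

Definition rebar (c : nat -> bool) (s : seq selt) : seq selt :=
  [seq (x.1, c x.1) | x <- s].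

Section Bars.

Implicit Types (s : seq selt) (c : nat -> bool).

Lemma nth_index_fst x0 s x :
  uniq (map fst s) -> x \in s -> nth x0 s (index x.1 (map fst s)) = x.
Proof.
elim: s => //= y s IH /andP[ys us]; rewrite in_cons => /orP[/eqP->|xs].
  by rewrite eqxx.
have /negbTE-> : y.1 != x.1 by apply: contraNneq ys => ->; apply: map_f.
exact: IH.
Qed.

Lemma bar_of_mem s x : uniq (map fst s) -> x \in s -> bar_of s x.1 = x.2.
Proof. by move=> us xs; rewrite /bar_of nth_index_fst. Qed.

Lemma bar_of_notin s v : v \notin map fst s -> bar_of s v = false.
Proof. by move=> vs; rewrite /bar_of memNindex // nth_default // size_map. Qed.

Lemma bar_of_rcons s a v : bar_of (rcons s (a, false)) v = bar_of s v.
Proof.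
rewrite /bar_of map_rcons -!cats1 index_cat nth_cat size_map.
have [vs|vs] := boolP (v \in map fst s); first by rewrite -(size_map fst) index_mem vs.
rewrite ltnNge leq_addr /= addKn (memNindex vs) size_map [in RHS]nth_default //.
by case: (a == v).
Qed.

Lemma fst_rebar c s : map fst (rebar c s) = map fst s.
Proof. by rewrite -map_comp. Qed.

Lemma size_rebar c s : size (rebar c s) = size s.
Proof. exact: size_map. Qed.

Lemma bar_of_rebar c s v : v \in map fst s -> bar_of (rebar c s) v = c v.
Proof.
move=> vs; have vi : index v (map fst s) < size s by rewrite -(size_map fst) index_mem.
by rewrite /bar_of fst_rebar (nth_map (0, false)) //= -(nth_map _ 0) // nth_index.
Qed.

Lemma eq_in_rebar c c' s : {in map fst s, c =1 c'} -> rebar c s = rebar c' s.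
Proof. by move=> cc'; apply/eq_in_map => x xs; rewrite cc' // map_f. Qed.

Lemma rebar_bar_of s : uniq (map fst s) -> rebar (bar_of s) s = s.
Proof.
move=> us; rewrite -[RHS]map_id; apply/eq_in_map => x xs.
by rewrite /= bar_of_mem //; case: x {xs}.
Qed.

Lemma rebarK c c' s : rebar c (rebar c' s) = rebar c s.
Proof. by rewrite /rebar -map_comp. Qed.

End Bars.

Section SignedPerm.

Variables (S : seq nat) (s : seq selt).
Hypothesis sS : signed_perm_on S s.

Lemma signed_perm_on_mem v : (v \in map fst s) = (v \in S).
Proof. exact: perm_mem. Qed.

Lemma signed_perm_on_size : size s = size S.
Proof. by rewrite -(size_map fst) (perm_size sS). Qed.

Lemma signed_perm_on_uniq : uniq S -> uniq (map fst s).
Proof. by rewrite (perm_uniq sS). Qed.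

End SignedPerm.

Lemma signed_perm_on_rebar S c s : signed_perm_on S (rebar c s) = signed_perm_on S s.
Proof. by rewrite /signed_perm_on fst_rebar. Qed.

Definition twist (q : seq selt) : seq selt :=
  rebar (fun v => bar_of q v (+) bar_of q v.-1) q.

Fixpoint prefix_bar (t : seq selt) (v : nat) : bool :=
  if v is u.+1 then bar_of t v (+) prefix_bar t u else false.

Definition untwist (t : seq selt) : seq selt := rebar (prefix_bar t) t.

Section Twist.

Variable m : nat.
Implicit Types (q t : seq selt).

Lemma mem_fst_iota1 s v :
  signed_perm_on (iota 1 m) s -> (v \in map fst s) = (0 < v <= m).
Proof. by move/signed_perm_on_mem->; rewrite mem_iota add1n ltnS. Qed.

Lemma untwistK q : signed_perm_on (iota 1 m) q -> untwist (twist q) = q.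
Proof.
move=> pq; have uq := signed_perm_on_uniq pq (iota_uniq 1 m).
have prefix_twist v : v <= m -> prefix_bar (twist q) v = bar_of q v.
  elim: v => [|v IH] vm /=; first by rewrite bar_of_notin // (mem_fst_iota1 _ pq).
  by rewrite IH ?(ltnW vm) // bar_of_rebar ?(mem_fst_iota1 _ pq) //= addbK.
rewrite /untwist rebarK -[RHS](rebar_bar_of uq); apply: eq_in_rebar => v.
by rewrite (mem_fst_iota1 _ pq) => /andP[_ /prefix_twist].
Qed.

Lemma bar_of_untwist t v :
  signed_perm_on (iota 1 m) t -> v <= m -> bar_of (untwist t) v = prefix_bar t v.
Proof.
case: v => [|v] pt vm; first by rewrite bar_of_notin // fst_rebar (mem_fst_iota1 _ pt).
by rewrite bar_of_rebar // (mem_fst_iota1 _ pt).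
Qed.

Lemma twistK t : signed_perm_on (iota 1 m) t -> twist (untwist t) = t.
Proof.
move=> pt; have ut := signed_perm_on_uniq pt (iota_uniq 1 m).
rewrite /twist {3}/untwist rebarK -[RHS](rebar_bar_of ut); apply: eq_in_rebar => v.
rewrite (mem_fst_iota1 _ pt) => /andP[v_gt0 vm].
rewrite !bar_of_untwist //; last exact: leq_trans (leq_pred v) vm.
by case: v v_gt0 {vm} => //= v _; rewrite addbK.
Qed.

End Twist.

Definition skew_fixfree (n : nat) (p : seq selt) : Prop :=
  forall k, k < n -> nth (0, false) p k != (k.+1, bar_of p k).

Lemma nth_twist_fixed q k : uniq (map fst q) -> k < size q ->
  (nth (0, false) (twist q) k == (k.+1, false)) =
  (nth (0, false) q k == (k.+1, bar_of q k)).
Proof.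
move=> uq kq; rewrite /twist /rebar (nth_map (0, false)) //.
have := bar_of_mem uq (mem_nth (0, false) kq).
case: (nth _ q k) => a b /= ->; rewrite !xpair_eqE.
by case: eqP => //= ->; case: b; case: (bar_of q k).
Qed.

Lemma typeB_derangementP m t :
  reflect (signed_perm_on (iota 1 m) t /\
           forall k, k < m -> nth (0, false) t k != (k.+1, false))
          (typeB_derangement m t).
Proof.
apply: (iffP andP) => -[pt fixt]; split=> //.
  by move=> k km; apply: (allP fixt k.+1); rewrite mem_iota add1n ltnS.
by apply/allP => -[|i]; rewrite mem_iota // add1n ltnS => /fixt.
Qed.

Lemma typeB_derangement_twist m q : signed_perm_on (iota 1 m) q ->
  typeB_derangement m (twist q) <-> skew_fixfree m q.
Proof.
move=> pq; have uq := signed_perm_on_uniq pq (iota_uniq 1 m).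
have sq : size q = m by rewrite (signed_perm_on_size pq) size_iota.
split=> [/typeB_derangementP[_ fixt] k km | fixq].
  by rewrite -nth_twist_fixed ?sq //; apply: fixt.
apply/typeB_derangementP; rewrite signed_perm_on_rebar; split=> // k km.
by rewrite nth_twist_fixed ?sq //; apply: fixq.
Qed.

Section NthIndex.

Variables (X p : seq selt) (y0 : selt).
Hypotheses (uX : uniq X) (up : uniq p) (sizeXp : size X = size p).

Let g x := nth y0 p (index x X).

Lemma map_nth_index : map g X = p.
Proof.
apply: (@eq_from_nth _ y0); rewrite size_map // => i iX.
by rewrite (nth_map y0) // /g index_uniq.
Qed.

(* [bij_onto] only restricts the first argument of injectivity, so [g] must
   send everything outside [X] away from [p]: this is why [y0 \notin p]. *)
Lemma bij_onto_nth_index Y : y0 \notin p -> p =i Y -> bij_onto g X Y.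
Proof.
move=> y0p pY; have iX x : x \in X -> index x X < size p by rewrite -sizeXp index_mem.
split; [|split].
- move=> x xX y; rewrite /g; have [yX|yX] := boolP (y \in X).
    by move/eqP; rewrite nth_uniq ?iX // => /eqP; apply: index_inj.
  rewrite (memNindex yX) sizeXp (nth_default _ (leqnn _)) => gx.
  by case/negP: y0p; rewrite -gx mem_nth ?iX.
- by move=> x xX; rewrite -pY mem_nth ?iX.
move=> y; rewrite -pY => yp; have yi : index y p < size X by rewrite sizeXp index_mem.
exists (nth y0 X (index y p)); first exact: mem_nth.
by rewrite /g index_uniq // nth_index.
Qed.

End NthIndex.

Lemma representation_signed_set n X f :
  signed_set n X -> representation n X f = map f X.
Proof.
move/eqP=> fX; rewrite /representation -fX -map_comp; apply/eq_in_map => x xX /=.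
by rewrite /sigma nth_index_fst // fX iota_uniq.
Qed.

Lemma nth_signed_set n X k :
  signed_set n X -> k < n -> nth (0, false) X k = (k.+1, (nth (0, false) X k).2).
Proof.
move/eqP=> fX kn; have kX : k < size X by rewrite -(size_map fst) fX size_iota.
have := nth_iota 0 1 kn; rewrite -fX (nth_map (0, false)) // add1n.
by case: (nth _ X k) => a b /= ->.
Qed.

Lemma repr_set_fixfree n p : repr_set n p -> skew_fixfree n p.
Proof.
case=> pp [_ [X [f [[sX [[_ [_ onto]] fixf]] repr]]]] k kn.
move: pp; rewrite -repr (representation_signed_set f sX) => pp.
have sizeX : size X = n by rewrite -(size_map fst) (eqP sX) size_iota.
set x := nth (0, false) X k; have xX : x \in X by rewrite mem_nth ?sizeX.
have ex : x = (k.+1, x.2) := nth_signed_set sX kn.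
have kp : (k, x.2) \in map f X.
  have [|x' x'X <-] := onto (k, x.2); last exact: map_f.
  by apply/mapP; exists x; rewrite // [in x.1]ex.
rewrite (nth_map (0, false)) ?sizeX // -/x.
rewrite (bar_of_mem (signed_perm_on_uniq pp (iota_uniq 0 n)) kp) /= -ex.
exact: fixf.
Qed.

Lemma fixfree_repr_set n p :
  signed_perm_on (iota 0 n) p -> last (0, true) p = (0, false) ->
  skew_fixfree n p -> repr_set n p.
Proof.
move=> pp lastp fixp; split=> //; split=> //.
have sizep : size p = n by rewrite (signed_perm_on_size pp) size_iota.
have up : uniq (map fst p) := signed_perm_on_uniq pp (iota_uniq 0 n).
pose X := [seq (i.+1, bar_of p i) | i <- iota 0 n].
have sX : signed_set n X.
  by apply/eqP; rewrite -map_comp -[1]/(1 + 0) iotaDl; apply: eq_map => i.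
have uX : uniq X by apply: (@map_uniq _ _ fst); rewrite (eqP sX) iota_uniq.
have sizeXp : size X = size p by rewrite size_map size_iota.
pose f x := nth (n, false) p (index x X).
have pX : p =i minus1 X.
  apply: perm_mem; rewrite -[p in perm_eq p](rebar_bar_of up).
  have -> : minus1 X = map (fun v => (v, bar_of p v)) (iota 0 n).
    by rewrite /minus1 -map_comp; apply: eq_map.
  by rewrite /rebar (map_comp (fun v => (v, bar_of p v)) fst); apply: perm_map.
have np : (n, false) \notin p.
  by apply: contraTN isT => /(map_f fst); rewrite (signed_perm_on_mem pp) mem_iota ltnn.
exists X, f; split; last first.
  by rewrite representation_signed_set // map_nth_index // (map_uniq up).
split=> //; split; first exact: bij_onto_nth_index (map_uniq up) sizeXp _ np pX.
move=> x xX; have kn : index x X < n by rewrite -sizep -sizeXp index_mem.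
have ex : x = ((index x X).+1, bar_of p (index x X)).
  by rewrite -{1}(nth_index (0, false) xX) (nth_map 0) ?nth_iota ?size_iota.
by rewrite {2}ex /f (set_nth_default (0, false)) ?sizep //; apply: fixp.
Qed.

Lemma repr_set_rcons m q :
  repr_set m.+1 (rcons q (0, false)) <->
  signed_perm_on (iota 1 m) q /\ skew_fixfree m q.
Proof.
have permE :
    signed_perm_on (iota 0 m.+1) (rcons q (0, false)) = signed_perm_on (iota 1 m) q.
  by rewrite /signed_perm_on map_rcons perm_rcons /= perm_cons.
have nthE k : k < m.+1 -> signed_perm_on (iota 1 m) q ->
    (nth (0, false) (rcons q (0, false)) k != (k.+1, bar_of (rcons q (0, false)) k)) =
    (k < m) ==> (nth (0, false) q k != (k.+1, bar_of q k)).
  move=> km pq; rewrite nth_rcons bar_of_rcons (signed_perm_on_size pq) size_iota.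
  by move: km; rewrite ltnS leq_eqVlt => /predU1P[->|->]; rewrite ?ltnn ?eqxx.
split=> [rp | [pq fixq]].
  have [pp _] := rp; rewrite permE in pp; split=> // k km.
  have kS : k < m.+1 := leqW km.
  by have := repr_set_fixfree rp kS; rewrite nthE // km => /implyP; apply.
apply: fixfree_repr_set; rewrite ?permE ?last_rcons // => k km.
by rewrite nthE //; apply/implyP; apply: fixq.
Qed.

Lemma repr_set_take m p : repr_set m.+1 p ->
  [/\ p = rcons (take m p) (0, false), signed_perm_on (iota 1 m) (take m p)
     & skew_fixfree m (take m p)].
Proof.
move=> rp; have ep : p = rcons (take m p) (0, false).
  case: rp => pp [lastp _]; move: (signed_perm_on_size pp) lastp; rewrite size_iota.
  case/lastP: p {pp} => // s x; rewrite size_rcons last_rcons => -[<-] ->.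
  by rewrite -!cats1 take_size_cat.
by have [] : signed_perm_on (iota 1 m) (take m p) /\ skew_fixfree m (take m p)
  by apply/repr_set_rcons; rewrite -ep.
Qed.

Lemma sig_bijective (A B : Type) (P : A -> Prop) (Q : B -> Prop)
    (F : A -> B) (G : B -> A) :
  (forall a, P a -> Q (F a)) -> (forall b, Q b -> P (G b)) ->
  (forall a, P a -> G (F a) = a) -> (forall b, Q b -> F (G b) = b) ->
  exists g : {a | P a} -> {b | Q b}, bijective g.
Proof.
move=> PQ QP GF FG.
exists (fun a => exist Q (F (proj1_sig a)) (PQ _ (proj2_sig a))).
exists (fun b => exist P (G (proj1_sig b)) (QP _ (proj2_sig b))).
- by case=> a Pa; apply: subset_eq_compat; apply: GF.
- by case=> b Qb; apply: subset_eq_compat; apply: FG.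
Qed.

Theorem lemma2 (n : nat) (hn : 2 <= n) :
  exists g : {p : seq selt | repr_set n p} -> {t : seq selt | derB_set n.-1 t},
    bijective g.
Proof.
case: n hn => [|m] // _ /=.
have take_rcons0 s : size s = m -> take m (rcons s (0, false)) = s.
  by move=> <-; rewrite -cats1 take_size_cat.
apply: (@sig_bijective _ _ _ _ (fun p => twist (take m p))
                               (fun t => rcons (untwist t) (0, false))).
- by move=> p /repr_set_take[_ pq fixq]; apply/typeB_derangement_twist.
- move=> t tB; have [pt _] := typeB_derangementP _ _ tB.
  have pu : signed_perm_on (iota 1 m) (untwist t) by rewrite signed_perm_on_rebar.
  apply/repr_set_rcons; split=> //.
  by apply/(typeB_derangement_twist pu); rewrite (twistK pt).
- by move=> p /repr_set_take[ep pq _]; rewrite (untwistK pq) -ep.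
- move=> t tB; have [pt _] := typeB_derangementP _ _ tB.
  by rewrite take_rcons0 ?(twistK pt) // size_rebar (signed_perm_on_size pt) size_iota.
Qed.
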